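(* Fix $0\le p_d,p_c\le1$. Let $\tilde{\mathcal{C}}(p_d,p_c)$ be the capacity region (with no CSIT) of any two-user binary fading interference channel $\tilde Y_i[t] = \tilde G_{ii}[t]\tilde X_i[t]\oplus \tilde G_{\bar i i}[t]\tilde X_{\bar i}[t]$, $i=1,2$, whose channel gain vectors $(\tilde G_{11}[t],\tilde G_{12}[t],\tilde G_{21}[t],\tilde G_{22}[t])$ are independent and identically distributed over time, arbitrarily correlated with each other at a given time, subject to: for $i=1,2$, $\Pr(\tilde G_{ii}[t]=1)=p_d$, $\Pr(\tilde G_{\bar i i}[t]=1)=p_c$, and $\Pr(\tilde G_{ii}[t]=1,\tilde G_{\bar i i}[t]=1)=\Pr(\tilde G_{ii}[t]=1)\Pr(\tilde G_{\bar i i}[t]=1)$. Then $\mathcal{C}(p_d,p_c)\subseteq\tilde{\mathcal{C}}(p_d,p_c)$, where $\mathcal{C}(p_d,p_c)$ is the capacity region of the two-user BFIC with no CSIT with mutually independent gains.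
   Context: Two-user BFIC: at each time $t$, ${\sf Tx}_i$ sends $X_i[t]\in\{0,1\}$ and ${\sf Rx}_i$ receives $Y_i[t] = G_{ii}[t]X_i[t] \oplus G_{\bar i i}[t] X_{\bar i}[t]$, $\bar i=3-i$, arithmetic in $\mathbb{F}_2$; gains $G_{ij}[t]$ (from ${\sf Tx}_i$ to ${\sf Rx}_j$) are mutually independent Bernoulli, independent over time, $G_{ii}[t]\sim\mathcal{B}(p_d)$, $G_{i\bar i}[t]\sim\mathcal{B}(p_c)$. For either channel (original or correlated), ${\sf Tx}_i$ sends a uniform message $W_i\in\{1,\dots,2^{nR_i}\}$, messages and gains are mutually independent, encoding is $X_i[t]=f_{i,t}(W_i)$ (no CSIT), and ${\sf Rx}_i$ decodes using its received sequence and the gains of its two incoming links, $\hat W_i=\varphi_i(Y_i^n,G_{ii}^n,G_{\bar i i}^n)$. $(R_1,R_2)$ is achievable if the average error probabilities at both receivers vanish as $n\to\infty$; the capacity region is the closure of achievable pairs. *)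

From HB Require Import structures.
From mathcomp Require Import all_boot all_order all_algebra.
From mathcomp Require Import all_classical all_reals all_analysis.
Set Implicit Arguments. Unset Strict Implicit. Unset Printing Implicit Defensive.
Import Order.TTheory GRing.Theory Num.Theory.
Import numFieldNormedType.Exports.
Local Open Scope ring_scope.
Local Open Scope classical_set_scope.

(* A channel-gain vector at one time instant: (G11, G12, G21, G22),
   where Gij is the gain of the link from Tx_i to Rx_j. *)
Definition gain := (bool * bool * bool * bool)%type.
Definition g11 (g : gain) : bool := g.1.1.1.
Definition g12 (g : gain) : bool := g.1.1.2.
Definition g21 (g : gain) : bool := g.1.2.
Definition g22 (g : gain) : bool := g.2.

Section Channel.
Variable R : realType.

(* q is a probability mass function on gain vectors (the per-time law;
   gains are i.i.d. over time with law q). *)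
Definition is_pmf (q : gain -> R) : Prop :=
  (forall g, 0 <= q g) /\ \sum_(g : gain) q g = 1.

Definition bern (p : R) (b : bool) : R := if b then p else 1 - p.

Definition indep_gain_pmf (pd pc : R) (g : gain) : R :=
  bern pd (g11 g) * bern pc (g12 g) * bern pc (g21 g) * bern pd (g22 g).

Definition prob_gain (q : gain -> R) (E : pred gain) : R :=
  \sum_(g : gain | E g) q g.

(* A code of block length n with M1, M2 messages, no CSIT:
   encoders depend on the message only; decoder i sees Y_i^n, G_ii^n, G_{ibar i}^n. *)
Record code (n M1 M2 : nat) := Code {
  enc1 : 'I_M1 -> {ffun 'I_n -> bool};
  enc2 : 'I_M2 -> {ffun 'I_n -> bool};
  dec1 : {ffun 'I_n -> bool} -> {ffun 'I_n -> bool} -> {ffun 'I_n -> bool} -> 'I_M1;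
  dec2 : {ffun 'I_n -> bool} -> {ffun 'I_n -> bool} -> {ffun 'I_n -> bool} -> 'I_M2 }.

Section Errors.
Variables (n M1 M2 : nat) (c : code n M1 M2) (q : gain -> R).

Definition seq_prob (G : {ffun 'I_n -> gain}) : R := \prod_(t < n) q (G t).

Definition rx1 (w1 : 'I_M1) (w2 : 'I_M2) (G : {ffun 'I_n -> gain}) : {ffun 'I_n -> bool} :=
  [ffun t => ((g11 (G t) && enc1 c w1 t) (+) (g21 (G t) && enc2 c w2 t))%B].
Definition rx2 (w1 : 'I_M1) (w2 : 'I_M2) (G : {ffun 'I_n -> gain}) : {ffun 'I_n -> bool} :=
  [ffun t => ((g22 (G t) && enc2 c w2 t) (+) (g12 (G t) && enc1 c w1 t))%B].

(* average error probabilities (uniform independent messages) *)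
Definition err1 : R :=
  ((M1 * M2)%:R)^-1 * \sum_(w1 : 'I_M1) \sum_(w2 : 'I_M2) \sum_(G : {ffun 'I_n -> gain})
    seq_prob G *
    (dec1 c (rx1 w1 w2 G) [ffun t => g11 (G t)] [ffun t => g21 (G t)] != w1)%:R.
Definition err2 : R :=
  ((M1 * M2)%:R)^-1 * \sum_(w1 : 'I_M1) \sum_(w2 : 'I_M2) \sum_(G : {ffun 'I_n -> gain})
    seq_prob G *
    (dec2 c (rx2 w1 w2 G) [ffun t => g22 (G t)] [ffun t => g12 (G t)] != w2)%:R.
End Errors.

Definition achievable (q : gain -> R) (R1 R2 : R) : Prop :=
  0 <= R1 /\ 0 <= R2 /\
  forall eps : R, 0 < eps -> exists N : nat, forall n : nat, (N <= n)%N ->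
    exists (M1 M2 : nat) (c : code n M1 M2),
      2 `^ (n%:R * R1) <= M1%:R /\ 2 `^ (n%:R * R2) <= M2%:R /\
      err1 c q <= eps /\ err2 c q <= eps.

Definition capacity_region (q : gain -> R) : set (R * R) :=
  closure [set r : R * R | achievable q r.1 r.2].

End Channel.

(* Receiver i decodes from its output and the gain pair (G_ii[t], G_{ji}[t]),
   which is i.i.d. over time, so its error probability depends on the gain law
   only through the law of that pair.  The law of a pair of bits is fixed by
   the two marginals and the probability that both are 1; the hypotheses make
   these those of independent B(p_d) and B(p_c) bits.  Hence every code has the
   same error probabilities on both channels, and the regions even coincide. *)

From Pilot Require Import Defs.
From HB Require Import structures.
From mathcomp Require Import all_boot all_order all_algebra.
From mathcomp Require Import all_classical all_reals all_analysis.
From mathcomp Require Import ring lra.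
Import Order.TTheory GRing.Theory Num.Theory.
Import numFieldNormedType.Exports.
Set Implicit Arguments. Unset Strict Implicit. Unset Printing Implicit Defensive.
Local Open Scope ring_scope.
Local Open Scope classical_set_scope.

Lemma big_pairE (R : Type) (idx : R) (op : Monoid.com_law idx) (I J : finType)
    (F : I * J -> R) :
  \big[op/idx]_p F p = \big[op/idx]_i \big[op/idx]_j F (i, j).
Proof. by rewrite pair_bigA; apply: eq_bigr => -[]. Qed.

Section PushforwardPmf.
Variable R : realType.

Definition pushpmf (T K : finType) (q : T -> R) (phi : T -> K) (k : K) : R :=
  \sum_(t | phi t == k) q t.

Lemma pushpmf_pred (T K : finType) (q : T -> R) (phi : T -> K) (P : pred K) :
  \sum_(t | P (phi t)) q t = \sum_(k | P k) pushpmf q phi k.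
Proof.
rewrite (partition_big phi P) //; apply: eq_bigr => k Pk; apply: eq_bigl => t.
by case: (eqVneq (phi t) k) => [->|]; rewrite ?Pk ?andbF.
Qed.

Lemma pushpmf_pair_bern (T : finType) (q : T -> R) (a b : pred T) (x y : R) :
  \sum_t q t = 1 -> \sum_(t | a t) q t = x -> \sum_(t | b t) q t = y ->
  \sum_(t | a t && b t) q t = x * y ->
  forall k, pushpmf q (fun t => (a t, b t)) k = bern x k.1 * bern y k.2.
Proof.
move=> sum1 Pa Pb Pab k; set s := pushpmf q _.
have cells (P : pred (bool * bool)) : \sum_(t | P (a t, b t)) q t =
    \sum_(i : bool) \sum_(j : bool) if P (i, j) then s (i, j) else 0.
  by rewrite pushpmf_pred big_mkcond big_pairE.
move: (cells predT) (cells (fun k => k.1)) (cells (fun k => k.2)).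
move: (cells (fun k => k.1 && k.2)) => /=; rewrite sum1 Pa Pb Pab !big_bool /=.
by case: k => [[] []]; rewrite /bern /=; lra.
Qed.

Lemma sum_iid_pushpmf (T K : finType) (q : T -> R) (phi : T -> K) n
    (F : {ffun 'I_n -> K} -> R) :
  \sum_(G : {ffun 'I_n -> T}) (\prod_(t < n) q (G t)) * F [ffun t => phi (G t)] =
  \sum_(H : {ffun 'I_n -> K}) F H * \prod_(t < n) pushpmf q phi (H t).
Proof.
rewrite (partition_big (fun G : {ffun 'I_n -> T} => [ffun t => phi (G t)]) xpredT) //.
apply: eq_bigr => H _.
rewrite (eq_bigr (fun G : {ffun _ -> T} => (\prod_(t < n) q (G t)) * F H)); last first.
  by move=> G /eqP ->.
rewrite -big_distrl mulrC bigA_distr_big_dep; congr (_ * _); apply: eq_bigl => G /=.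
apply/eqP/familyP => [<- t | GH]; first by rewrite unfold_in ffunE.
by apply/ffunP => t; rewrite ffunE; have := GH t; rewrite unfold_in => /eqP.
Qed.

Lemma eq_sum_iid_pushpmf (T K : finType) (q q' : T -> R) (phi : T -> K) n
    (F : {ffun 'I_n -> K} -> R) :
  pushpmf q phi =1 pushpmf q' phi ->
  \sum_(G : {ffun 'I_n -> T}) (\prod_(t < n) q (G t)) * F [ffun t => phi (G t)] =
  \sum_(G : {ffun 'I_n -> T}) (\prod_(t < n) q' (G t)) * F [ffun t => phi (G t)].
Proof.
move=> qq'; rewrite (sum_iid_pushpmf q phi F) (sum_iid_pushpmf q' phi F).
by apply: eq_bigr => H _; congr (_ * _); apply: eq_bigr => t _.
Qed.

End PushforwardPmf.

Section BinaryFadingChannel.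
Variable R : realType.

Lemma sum_gain (F : gain -> R) :
  \sum_(g : gain) F g =
  \sum_(a : bool) \sum_(b : bool) \sum_(c : bool) \sum_(d : bool) F (a, b, c, d).
Proof. by rewrite !big_pairE. Qed.

Lemma pushpmf_indep_gain1 (pd pc : R) :
  pushpmf (indep_gain_pmf pd pc) (fun g => (g11 g, g21 g)) =1
  fun k => bern pd k.1 * bern pc k.2.
Proof.
move=> [[] []]; rewrite /pushpmf big_mkcond sum_gain !big_bool.
all: by rewrite /indep_gain_pmf /bern /=; ring.
Qed.

Lemma pushpmf_indep_gain2 (pd pc : R) :
  pushpmf (indep_gain_pmf pd pc) (fun g => (g22 g, g12 g)) =1
  fun k => bern pd k.1 * bern pc k.2.
Proof.
move=> [[] []]; rewrite /pushpmf big_mkcond sum_gain !big_bool.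
all: by rewrite /indep_gain_pmf /bern /=; ring.
Qed.

Section Errors.
Variables (n M1 M2 : nat) (c : Defs.code n M1 M2) (q q' : gain -> R).

Lemma err1_pushpmf :
  pushpmf q (fun g => (g11 g, g21 g)) =1 pushpmf q' (fun g => (g11 g, g21 g)) ->
  err1 c q = err1 c q'.
Proof.
move=> qq'; congr (_ * _); apply: eq_bigr => w1 _; apply: eq_bigr => w2 _.
pose F (H : {ffun 'I_n -> bool * bool}) : R :=
  (dec1 c [ffun t => ((H t).1 && enc1 c w1 t) (+) ((H t).2 && enc2 c w2 t)]
     [ffun t => (H t).1] [ffun t => (H t).2] != w1)%:R.
have rx1E q0 : \sum_(G : {ffun 'I_n -> gain}) seq_prob q0 G *
    (dec1 c (rx1 c w1 w2 G) [ffun t => g11 (G t)] [ffun t => g21 (G t)] != w1)%:R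
  = \sum_(G : {ffun 'I_n -> gain})
      (\prod_(t < n) q0 (G t)) * F [ffun t => (g11 (G t), g21 (G t))].
  apply: eq_bigr => G _; congr (_ * (_ != _)%:R).
  by congr (dec1 c _ _ _); apply/ffunP => t; rewrite !ffunE.
by rewrite !rx1E; exact: (eq_sum_iid_pushpmf F qq').
Qed.

Lemma err2_pushpmf :
  pushpmf q (fun g => (g22 g, g12 g)) =1 pushpmf q' (fun g => (g22 g, g12 g)) ->
  err2 c q = err2 c q'.
Proof.
move=> qq'; congr (_ * _); apply: eq_bigr => w1 _; apply: eq_bigr => w2 _.
pose F (H : {ffun 'I_n -> bool * bool}) : R :=
  (dec2 c [ffun t => ((H t).1 && enc2 c w2 t) (+) ((H t).2 && enc1 c w1 t)]
     [ffun t => (H t).1] [ffun t => (H t).2] != w2)%:R.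
have rx2E q0 : \sum_(G : {ffun 'I_n -> gain}) seq_prob q0 G *
    (dec2 c (rx2 c w1 w2 G) [ffun t => g22 (G t)] [ffun t => g12 (G t)] != w2)%:R
  = \sum_(G : {ffun 'I_n -> gain})
      (\prod_(t < n) q0 (G t)) * F [ffun t => (g22 (G t), g12 (G t))].
  apply: eq_bigr => G _; congr (_ * (_ != _)%:R).
  by congr (dec2 c _ _ _); apply/ffunP => t; rewrite !ffunE.
by rewrite !rx2E; exact: (eq_sum_iid_pushpmf F qq').
Qed.

End Errors.

Lemma capacity_region_subset (q q' : gain -> R) :
  (forall n M1 M2 (c : Defs.code n M1 M2),
     err1 c q' = err1 c q /\ err2 c q' = err2 c q) ->
  capacity_region q `<=` capacity_region q'.
Proof.
move=> errE; apply: closureS => -[R1 R2] [R1ge0 [R2ge0 codes]].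
do 2 split=> //; move=> eps /codes [N HN]; exists N => n /HN [M1 [M2 [c]]].
by exists M1, M2, c; case: (errE n M1 M2 c) => -> ->.
Qed.

End BinaryFadingChannel.

Theorem lemma2 (R : realType) (pd pc : R) (q : gain -> R) :
  0 <= pd <= 1 -> 0 <= pc <= 1 ->
  is_pmf q ->
  prob_gain q (fun g => g11 g) = pd ->
  prob_gain q (fun g => g22 g) = pd ->
  prob_gain q (fun g => g21 g) = pc ->
  prob_gain q (fun g => g12 g) = pc ->
  prob_gain q (fun g => g11 g && g21 g) = pd * pc ->
  prob_gain q (fun g => g22 g && g12 g) = pd * pc ->
  capacity_region (indep_gain_pmf pd pc) `<=` capacity_region q.
Proof.
move=> _ _ [_ q1] q11 q22 q21 q12 q1121 q2212.
apply: capacity_region_subset => n M1 M2 c; split.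
- apply: err1_pushpmf => k; rewrite pushpmf_indep_gain1.
  exact: pushpmf_pair_bern.
- apply: err2_pushpmf => k; rewrite pushpmf_indep_gain2.
  exact: pushpmf_pair_bern.
Qed.
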